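(* Let $X$ be the Banach space defined in the context, with unit vector basis $(e_i)$. Let $(x_i)$ be a normalized block basis of $(e_i)$ which has a spreading model $(u_i)$. Then $\ell_p$ for $1<p<\infty$ and $c_0$ are not block finitely represented in $(u_i)$.
   Context: Let $f(i)=\log_2(1+i)$ and fix an increasing sequence of positive integers $(n_k)$ with $\sum_k 1/f(n_k)<1/10$. For $E,F\subseteq\mathbb{N}$, $E<F$ means $\max E<\min F$; for $x\in c_{00}$ (finitely supported real sequences) $Ex$ is the restriction of $x$ to $E$. Define norms on $c_{00}$ inductively: $\|x\|_{(0)}=\max_i|x(i)|$; $\|x\|_{(k,i)}=\max_{E_1<\cdots<E_i}\frac1{f(i)}\sum_{j=1}^i\|E_jx\|_{(k)}$; $\|x\|_{(k+1)}=\max\{\|x\|_{(k)},(\sum_{i}\|x\|_{(k,n_i)}^2)^{1/2}\}$. Then $\|x\|=\lim_k\|x\|_{(k)}$ is a $1$-unconditional norm satisfying $\|x\|=\max\{\|x\|_{c_0},(\sum_k\|x\|_{n_k}^2)^{1/2}\}$ with $\|x\|_k=\max_{E_1<\cdots<E_k}\frac1{f(k)}\sum_{i=1}^k\|E_ix\|$. $X$ is the completion of $c_{00}$ under $\|\cdot\|$, and $(e_i)$ is the unit vector basis. A sequence $(u_i)$ is a spreading model of $(x_i)$ if $\|\sum_{j=1}^n a_ju_j\|=\lim_{\ell\to\infty,\ \ell<i_1<\cdots<i_n}\|\sum_{j=1}^n a_jx_{i_j}\|$ for all $n$ and scalars $(a_j)$. A basic sequence $(w_i)$ (e.g. the unit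 vector basis of $\ell_p$ or $c_0$) is block finitely represented in $(y_i)$ if for all $\varepsilon>0$ and $n\in\mathbb{N}$ there is a block basis $(z_i)_{i=1}^n$ of $(y_i)$ with $(1+\varepsilon)^{-1}\|\sum_1^n a_iw_i\|\le\|\sum_1^n a_iz_i\|\le(1+\varepsilon)\|\sum_1^n a_iw_i\|$ for all scalars. *)

From HB Require Import structures.
From mathcomp Require Import all_boot all_order all_algebra.
From mathcomp Require Import all_classical all_reals all_analysis.
Set Implicit Arguments. Unset Strict Implicit. Unset Printing Implicit Defensive.
Import Order.TTheory GRing.Theory Num.Theory.
Import numFieldNormedType.Exports.
Local Open Scope classical_set_scope.
Local Open Scope ring_scope.

Section Defs.
Variable R : realType.

Definition flog (i : nat) : R := ln (1 + i%:R) / ln 2.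

Definition c00 (x : nat -> R) : Prop := exists N, forall i, (N <= i)%N -> x i = 0.

Definition restr (E : nat -> bool) (x : nat -> R) : nat -> R :=
  fun i => if E i then x i else 0.

Definition successive_sets (i : nat) (E : nat -> nat -> bool) : Prop :=
  forall j1 j2, (j1 < j2)%N -> (j2 < i)%N ->
    forall a b, E j1 a -> E j2 b -> (a < b)%N.

Definition norm_ki (N : (nat -> R) -> R) (i : nat) (x : nat -> R) : R :=
  sup [set (\sum_(j < i) N (restr (E j) x)) / flog i
      | E in [set E | successive_sets i E]].

Fixpoint normk (n : nat -> nat) (k : nat) (x : nat -> R) : R :=
  match k with
  | 0 => sup [set `|x i| | i in [set: nat]]
  | k'.+1 => Num.max (normk n k' x)
      (Num.sqrt (limn (series (fun m => (norm_ki (normk n k') (n m) x) ^+ 2))))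
  end.

Definition Xnorm (n : nat -> nat) (x : nat -> R) : R :=
  limn (fun k => normk n k x).

Definition admissible (n : nat -> nat) : Prop :=
  (0 < n 0)%N /\ (forall k, (n k < n k.+1)%N) /\
  cvgn (series (fun k => (flog (n k))^-1)) /\
  limn (series (fun k => (flog (n k))^-1)) < 10^-1.

Definition normalized_block_basis (n : nat -> nat) (x : nat -> nat -> R) : Prop :=
  (forall i, c00 (x i)) /\
  (forall i, exists m, x i m != 0) /\
  (forall i j, (i < j)%N -> forall a b, x i a != 0 -> x j b != 0 -> (a < b)%N) /\
  (forall i, Xnorm n (x i) = 1).

Definition spreading_model (n : nat -> nat) (x : nat -> nat -> R)
  (V : normedModType R) (u : nat -> V) : Prop :=
  forall (m : nat) (a : 'I_m -> R) (eps : R), 0 < eps ->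
    exists l : nat, forall s : 'I_m -> nat,
      (forall j, (l < s j)%N) ->
      (forall j1 j2 : 'I_m, (j1 < j2)%N -> (s j1 < s j2)%N) ->
      `| Xnorm n (fun t => \sum_(j < m) a j * x (s j) t)
         - `| \sum_(j < m) a j *: u j | | < eps.

Definition block_of (V : normedModType R) (u : nat -> V) (m : nat)
  (z : 'I_m -> V) : Prop :=
  exists (p : nat -> nat) (b : nat -> R),
    (forall i, (i < m)%N -> (p i < p i.+1)%N) /\
    (forall i : 'I_m, z i = \sum_(p i <= j < p i.+1) b j *: u j) /\
    (forall i : 'I_m, z i != 0).

(* a basic sequence (w_i), given through the norm W m a = || sum_{i<m} a_i w_i ||,
   is block finitely represented in (u_i) *)
Definition block_fin_rep (W : forall m : nat, ('I_m -> R) -> R)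
  (V : normedModType R) (u : nat -> V) : Prop :=
  forall (eps : R), 0 < eps -> forall m : nat,
    exists z : 'I_m -> V, block_of u z /\
      forall a : 'I_m -> R,
        (1 + eps)^-1 * W m a <= `| \sum_(i < m) a i *: z i | /\
        `| \sum_(i < m) a i *: z i | <= (1 + eps) * W m a.

Definition lp_norm (p : R) (m : nat) (a : 'I_m -> R) : R :=
  (\sum_(i < m) `|a i| `^ p) `^ p^-1.

Definition c0_norm (m : nat) (a : 'I_m -> R) : R :=
  \big[Num.max/0]_(i < m) `|a i|.

End Defs.

From HB Require Import structures.
From mathcomp Require Import all_boot all_order all_algebra.
From mathcomp Require Import all_classical all_reals all_analysis.
From mathcomp Require Import ring lra.
Import Order.TTheory GRing.Theory Num.Theory.
Import numFieldNormedType.Exports.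
Set Implicit Arguments. Unset Strict Implicit. Unset Printing Implicit Defensive.
Local Open Scope ring_scope.

(* The norm of X satisfies the lower estimate
   ||x|| >= (1/f(n_k)) sum_(i < n_k) ||E_i x|| for successive sets E_i, and the
   spreading model inherits it: for every block basis (z_i) of (u_i),
   || z_0 + ... + z_(n_k - 1) || >= (1/f(n_k)) sum_i ||z_i||.
   If l_p (or c_0) were block finitely represented in (u_i), we could pick
   z_i with ||z_i|| >= 1/2 and ||z_0 + ... + z_(n_k - 1)|| <= 2 n_k^(1/p)
   (resp. <= 2), so that n_k <= 4 f(n_k) n_k^(1/p); this fails for k large
   because f grows logarithmically. *)

Lemma successive_sets_disjoint i E (j j' : 'I_i) t :
  successive_sets i E -> E j t -> E j' t -> j = j'.
Proof.
move=> E_succ Ejt Ej't; apply: val_inj; case: (ltngtP j j') => // jj'.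
- by have := E_succ _ _ jj' (ltn_ord j') _ _ Ejt Ej't; rewrite ltnn.
- by have := E_succ _ _ jj' (ltn_ord j) _ _ Ej't Ejt; rewrite ltnn.
Qed.

Definition vanishes_from (R : realType) (N : nat) (x : nat -> R) : Prop :=
  forall t, (N <= t)%N -> x t = 0.

Definition l1norm (R : realType) (N : nat) (x : nat -> R) : R :=
  \sum_(t < N) `|x t|.

Section l1norm.
Variables (R : realType) (N : nat).
Implicit Types x : nat -> R.

Lemma l1norm_ge0 x : 0 <= l1norm N x.
Proof. by apply: sumr_ge0 => t _. Qed.

Lemma ler_abs_l1norm x t : vanishes_from N x -> `|x t| <= l1norm N x.
Proof.
move=> x_van; have [tN|Nt] := ltnP t N; last by rewrite x_van // normr0 l1norm_ge0.
rewrite /l1norm (bigD1 (Ordinal tN)) //= lerDl.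
by apply: sumr_ge0 => i _.
Qed.

Lemma vanishes_from_restr E x : vanishes_from N x -> vanishes_from N (restr E x).
Proof. by move=> x_van t Nt; rewrite /restr x_van //; case: (E t). Qed.

Lemma sum_l1norm_restr_le x i E : successive_sets i E ->
  \sum_(j < i) l1norm N (restr (E j) x) <= l1norm N x.
Proof.
move=> E_succ; rewrite /l1norm exchange_big /=; apply: ler_sum => t _.
have [[j Ejt]|noE] := pselect (exists j : 'I_i, E j t).
  rewrite (bigD1 j) //= big1 ?addr0; first by rewrite /restr Ejt.
  move=> j' j'j; rewrite /restr; case: ifP => [Ej't|_]; last by rewrite normr0.
  by move: j'j; rewrite (successive_sets_disjoint E_succ Ej't Ejt) eqxx.
rewrite big1 ?normr_ge0 // => j _; rewrite /restr; case: ifP => [Ejt|_].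
  by exfalso; apply: noE; exists j.
by rewrite normr0.
Qed.

End l1norm.

Lemma flog_ge1 (R : realType) i : (0 < i)%N -> 1 <= flog R i.
Proof.
move=> i_gt0; rewrite /flog ler_pdivlMr ?ln_gt0 ?ltr1n // mul1r.
by rewrite ler_ln ?posrE ?ltr0n // -[X in X <= _]/(1 + 1) lerD2l ler1n.
Qed.

Lemma flog_gt0 (R : realType) i : (0 < i)%N -> 0 < flog R i.
Proof. by move=> i_gt0; apply: lt_le_trans (flog_ge1 R i_gt0). Qed.

Lemma flog_powR_sublinear (R : realType) (C r : R) : 0 < C -> 0 < r < 1 ->
  exists M0 : nat, forall M : nat, (M0 <= M)%N ->
    C * flog R M * M%:R `^ r < M%:R.
Proof.
move=> C_gt0 /andP[r_gt0 r_lt1].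
pose d := (1 - r) / 2.
have d_gt0 : 0 < d by rewrite divr_gt0 // subr_gt0.
have ln2_gt0 : 0 < ln (2 : R) by rewrite ln_gt0 ?ltr1n.
pose K := 2 * C / (d * ln 2).
have K_gt0 : 0 < K by apply: divr_gt0; apply: mulr_gt0.
exists (Num.truncn (K `^ d^-1)).+1; move=> M M0M.
have M_ge1 : 1 <= M%:R :> R by rewrite ler1n (leq_trans _ M0M).
have M_gt0 : 0 < M%:R :> R by apply: lt_le_trans M_ge1.
set Q := M%:R `^ d; set P := M%:R `^ r.
have Q_gt0 : 0 < Q by apply: powR_gt0.
have P_gt0 : 0 < P by apply: powR_gt0.
have K_lt_Q : K < Q.
  have K_lt_M : K `^ d^-1 < M%:R.
    by apply: lt_le_trans (truncnS_gt _) _; rewrite ler_nat.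
  have := gt0_ltr_powR d_gt0 _ _ K_lt_M.
  rewrite -powRrM mulVf ?gt_eqF // powRr1 ?ltW //.
  by apply; rewrite nnegrE ?powR_ge0 // ltW.
have M_PQQ : M%:R = P * Q * Q.
  have rdd : r + d + d = 1 by rewrite /d; lra.
  by rewrite -!powRD ?rdd ?powRr1 ?ltW //; apply/implyP => _; lra.
(* ln y = ln (y^d) / d < y^d / d, and (1 + M)^d <= (2 M)^d <= 2 M^d *)
have ln_lt : ln (1 + M%:R) < 2 * Q / d.
  have pow_gt0 : 0 < (1 + M%:R) `^ d by apply: powR_gt0; lra.
  have := ln_sublinear pow_gt0; rewrite ln_powR => ln_pow_lt.
  have le_2Q : (1 + M%:R) `^ d <= 2 * Q.
    apply: (@le_trans _ _ ((2 * M%:R) `^ d)).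
      by apply: ge0_ler_powR; rewrite ?nnegrE ?(ltW d_gt0) //; lra.
    rewrite powRM ?ler0n ?(ltW M_gt0) // ler_wpM2r ?powR_ge0 //.
    by apply: ler1_powR; rewrite ?ler1n // /d; lra.
  by rewrite ltr_pdivlMr // mulrC; apply: lt_le_trans ln_pow_lt le_2Q.
have flog_lt : C * flog R M < K * Q.
  have -> : K * Q = C * ((2 * Q / d) / ln 2) by rewrite /K; field; rewrite ?gt_eqF.
  by rewrite /flog ltr_pM2l // ltr_pM2r ?invr_gt0.
have flog_lt_QQ : C * flog R M < Q * Q.
  by apply: lt_trans flog_lt _; rewrite ltr_pM2r.
rewrite M_PQQ (_ : P * Q * Q = Q * Q * P); last by ring.
by rewrite ltr_pM2r.
Qed.

Section norm_ki_bounds.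
Variables (R : realType) (N : nat) (Nm : (nat -> R) -> R).
Hypothesis Nm_bounds : forall y, vanishes_from N y -> 0 <= Nm y <= l1norm N y.
Variables (i : nat) (x : nat -> R).
Hypotheses (i_gt0 : (0 < i)%N) (x_van : vanishes_from N x).

Let pieces_le E : successive_sets i E ->
  (\sum_(j < i) Nm (restr (E j) x)) / flog R i <= l1norm N x / flog R i.
Proof.
move=> E_succ; rewrite ler_pM2r ?invr_gt0 ?flog_gt0 //.
apply: le_trans (sum_l1norm_restr_le N x E_succ); apply: ler_sum => j _.
by case/andP: (Nm_bounds (vanishes_from_restr (E j) x_van)).
Qed.

Let pieces_bounded : has_ubound [set (\sum_(j < i) Nm (restr (E j) x)) / flog R i
  | E in [set E | successive_sets i E]].
Proof. by exists (l1norm N x / flog R i) => _ [E E_succ <-]; apply: pieces_le. Qed.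

Lemma norm_ki_ge E : successive_sets i E ->
  (\sum_(j < i) Nm (restr (E j) x)) / flog R i <= norm_ki Nm i x.
Proof. by move=> E_succ; apply: (ub_le_sup pieces_bounded); exists E. Qed.

Lemma norm_ki_ge0 : 0 <= norm_ki Nm i x.
Proof.
have no_sets : successive_sets i (fun _ _ => false) by [].
apply: le_trans (norm_ki_ge no_sets); apply: divr_ge0; last exact/ltW/flog_gt0.
apply: sumr_ge0 => j _.
by case/andP: (Nm_bounds (vanishes_from_restr (fun=> false) x_van)).
Qed.

Lemma norm_ki_le : norm_ki Nm i x <= l1norm N x / flog R i.
Proof.
apply: ge_sup; first by eexists; exists (fun _ _ => false).
by move=> _ [E E_succ <-]; apply: pieces_le.
Qed.

Lemma norm_ki_sqr_le : norm_ki Nm i x ^+ 2 <= l1norm N x ^+ 2 / flog R i.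
Proof.
have f_ge1 := flog_ge1 R i_gt0; have f_gt0 := flog_gt0 R i_gt0.
apply: le_trans (_ : (l1norm N x / flog R i) ^+ 2 <= _).
  by rewrite ler_pXn2r ?nnegrE ?norm_ki_ge0 ?norm_ki_le // divr_ge0 ?l1norm_ge0 ?ltW.
rewrite expr_div_n ler_wpM2l ?exprn_ge0 ?l1norm_ge0 //.
have f_le_sqr : flog R i <= flog R i ^+ 2 by rewrite expr2 ler_peMl // ltW.
by rewrite lef_pV2 // posrE exprn_gt0.
Qed.

End norm_ki_bounds.

Lemma term_le_lim_series (R : realType) (a : R ^nat) m :
  (forall k, 0 <= a k) -> cvgn (series a) -> a m <= limn (series a).
Proof.
move=> a_ge0 a_cvg.
have a_nd : nondecreasing_seq (series a).
  by apply: nondecreasing_series => k _ _; apply: a_ge0.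
apply: le_trans (nondecreasing_cvgn_le a_nd a_cvg m.+1).
by rewrite /series /= big_nat_recr //= lerDr; apply: sumr_ge0.
Qed.

Lemma c00_sum (R : realType) m (G : 'I_m -> nat -> R) :
  (forall j, c00 (G j)) -> c00 (fun t => \sum_(j < m) G j t).
Proof.
move=> G_c00; have [N G_van] := fin_all_exists G_c00.
exists (\max_(j < m) N j) => t t_ge; apply: big1 => j _; apply: G_van.
exact: leq_trans (leq_bigmax j) t_ge.
Qed.

Section admissible_norms.
Variables (R : realType) (n : nat -> nat).
Hypothesis adm : admissible R n.
Implicit Types x : nat -> R.

Lemma admissible_gt0 m : (0 < n m)%N.
Proof.
have [n0_gt0 [n_incr _]] := adm.
by elim: m => // m IH; apply: ltn_trans IH (n_incr m).
Qed.

Lemma admissible_ge k : (k <= n k)%N.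
Proof.
have [_ [n_incr _]] := adm.
by elim: k => // k IH; apply: leq_ltn_trans IH (n_incr k).
Qed.

Lemma norm_ki_series N (Nm : (nat -> R) -> R) x :
  (forall y, vanishes_from N y -> 0 <= Nm y <= l1norm N y) -> vanishes_from N x ->
  cvgn (series (fun m => norm_ki Nm (n m) x ^+ 2)) /\
  limn (series (fun m => norm_ki Nm (n m) x ^+ 2)) <= l1norm N x ^+ 2.
Proof.
move=> Nm_bounds x_van; have [_ [_ [w_cvg w_lt]]] := adm.
set w := fun k => (flog R (n k))^-1 in w_cvg w_lt.
have q_le k : norm_ki Nm (n k) x ^+ 2 <= (l1norm N x ^+ 2 *: w) k.
  change (norm_ki Nm (n k) x ^+ 2 <= l1norm N x ^+ 2 * w k).
  exact: (norm_ki_sqr_le Nm_bounds (admissible_gt0 k) x_van).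
have q_cvg : cvgn (series (fun m => norm_ki Nm (n m) x ^+ 2)).
  apply: series_le_cvg q_le _ => [k|k|]; last exact: is_cvg_seriesZ.
    by rewrite exprn_ge0 // (norm_ki_ge0 Nm_bounds (admissible_gt0 k) x_van).
  by rewrite /= mulr_ge0 ?exprn_ge0 ?l1norm_ge0 // invr_ge0 ltW ?flog_gt0 ?admissible_gt0.
split => //.
apply: le_trans (lim_series_le q_cvg (is_cvg_seriesZ w_cvg) q_le) _.
rewrite lim_seriesZ // ler_piMr ?exprn_ge0 ?l1norm_ge0 //.
by apply: ltW (lt_le_trans w_lt _); rewrite invf_le1 ?ler1n.
Qed.

Lemma normk_bounds N j x : vanishes_from N x -> 0 <= normk n j x <= l1norm N x.
Proof.
elim: j x => [|j IH] x x_van /=.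
  have abs_bounded : has_ubound [set `|x t| | t in [set: nat]].
    by exists (l1norm N x) => _ [t _ <-]; apply: ler_abs_l1norm.
  apply/andP; split.
    by apply: le_trans (normr_ge0 (x 0%N)) _; apply: (ub_le_sup abs_bounded); exists 0%N.
  apply: ge_sup; first by exists `|x 0%N|, 0%N.
  by move=> _ [t _ <-]; apply: ler_abs_l1norm.
have [_ lim_le] := norm_ki_series IH x_van.
have /andP[normk_ge0 normk_le] := IH x x_van.
rewrite le_max normk_ge0 ge_max normk_le /=.
by rewrite -(ger0_norm (l1norm_ge0 N x)) -sqrtr_sqr ler_sqrt ?exprn_ge0 ?l1norm_ge0.
Qed.

Lemma norm_ki_le_normkS N j k x : vanishes_from N x ->
  norm_ki (normk n j) (n k) x <= normk n j.+1 x.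
Proof.
move=> x_van.
have Nm_bounds (y : nat -> R) : vanishes_from N y -> 0 <= normk n j y <= l1norm N y.
  exact: normk_bounds.
have q_ge0 m := norm_ki_ge0 Nm_bounds (admissible_gt0 m) x_van.
have [q_cvg _] := norm_ki_series Nm_bounds x_van.
have term_le := term_le_lim_series k (fun m => exprn_ge0 2 (q_ge0 m)) q_cvg.
rewrite /= le_max -(ger0_norm (q_ge0 k)) -sqrtr_sqr ler_sqrt ?term_le ?orbT //.
exact: le_trans (exprn_ge0 2 (q_ge0 k)) term_le.
Qed.

Let normk_nondecreasing x : nondecreasing_seq (fun j => normk n j x).
Proof. by apply/nondecreasing_seqP => j /=; rewrite le_max lexx. Qed.

Lemma normk_cvg N x : vanishes_from N x -> cvgn (fun j => normk n j x).
Proof.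
move=> x_van; apply: nondecreasing_is_cvgn; first exact: normk_nondecreasing.
by exists (l1norm N x) => _ [j _ <-]; case/andP: (normk_bounds j x_van).
Qed.

Lemma normk_le_Xnorm N j x : vanishes_from N x -> normk n j x <= Xnorm n x.
Proof.
by move=> x_van; apply: nondecreasing_cvgn_le (normk_nondecreasing x) (normk_cvg x_van) j.
Qed.

Lemma sum_Xnorm_restr_le N k E x : vanishes_from N x -> successive_sets (n k) E ->
  (\sum_(i < n k) Xnorm n (restr (E i) x)) / flog R (n k) <= Xnorm n x.
Proof.
move=> x_van E_succ.
have pieces_cvg : ((\sum_(i < n k) normk n j (restr (E i) x)) / flog R (n k) @[j --> \oo]
    --> (\sum_(i < n k) Xnorm n (restr (E i) x)) / flog R (n k))%classic.
  apply: cvgMr_tmp; apply: cvg_big => //; first exact: add_continuous.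
  by move=> i _; apply: normk_cvg (vanishes_from_restr (E i) x_van).
rewrite -(cvg_lim _ pieces_cvg) //; apply: limr_le; first exact: cvgP pieces_cvg.
apply: nearW => j.
have Nm_bounds (y : nat -> R) : vanishes_from N y -> 0 <= normk n j y <= l1norm N y.
  exact: normk_bounds.
apply: le_trans (norm_ki_ge Nm_bounds (admissible_gt0 k) x_van E_succ) _.
exact: le_trans (norm_ki_le_normkS j k x_van) (normk_le_Xnorm j.+1 x_van).
Qed.

Lemma sum_Xnorm_successive_le k (Y : nat -> nat -> R) :
  (forall i, c00 (Y i)) -> successive_sets (n k) (fun i t => Y i t != 0) ->
  (\sum_(i < n k) Xnorm n (Y i)) / flog R (n k)
    <= Xnorm n (fun t => \sum_(i < n k) Y i t).
Proof.
move=> Y_c00 Y_succ.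
have [N sum_van] := c00_sum (fun i : 'I_(n k) => Y_c00 i).
have restr_sum (i : 'I_(n k)) :
    restr (fun t => Y i t != 0) (fun t => \sum_(i' < n k) Y i' t) = Y i.
  apply: funext => t; rewrite /restr; case: ifPn => [Yit|]; last by rewrite negbK => /eqP.
  rewrite (bigD1 i) //= big1 ?addr0 // => i' i'i; have [//|Yi't] := eqVneq (Y i' t) 0.
  by move: i'i; rewrite (successive_sets_disjoint Y_succ Yi't Yit) eqxx.
have -> : \sum_(i < n k) Xnorm n (Y i) =
    \sum_(i < n k) Xnorm n (restr (fun t => Y i t != 0) (fun t => \sum_(i' < n k) Y i' t)).
  by apply: eq_bigr => i _; rewrite restr_sum.
exact: sum_Xnorm_restr_le sum_van Y_succ.
Qed.

End admissible_norms.

Lemma nonzero_summand (V : nmodType) m (F : 'I_m -> V) :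
  \sum_(j < m) F j != 0 -> exists j, F j != 0.
Proof.
apply: contraNP => all_zero; apply/eqP/big1 => j _.
by have [//|Fj] := eqVneq (F j) 0; case: all_zero; exists j.
Qed.

Lemma successive_combinations (R : realType) K m (c x : nat -> nat -> R)
    (s : 'I_m -> nat) :
  successive_sets K (fun i j => c i j != 0) ->
  (forall j1 j2 : 'I_m, (j1 < j2)%N -> (s j1 < s j2)%N) ->
  (forall i j, (i < j)%N -> forall a b, x i a != 0 -> x j b != 0 -> (a < b)%N) ->
  successive_sets K (fun i t => \sum_(j < m) c i j * x (s j) t != 0).
Proof.
move=> c_succ s_incr x_succ i1 i2 i12 i2K a b.
move=> /nonzero_summand[j1]; rewrite mulf_eq0 negb_or => /andP[c1 x1].
move=> /nonzero_summand[j2]; rewrite mulf_eq0 negb_or => /andP[c2 x2].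
exact: x_succ (s_incr _ _ (c_succ _ _ i12 i2K _ _ c1 c2)) _ _ x1 x2.
Qed.

Lemma block_of_coef (R : realType) (V : normedModType R) (u : nat -> V) K
    (z : 'I_K -> V) :
  block_of u z -> exists m (c : nat -> nat -> R),
    successive_sets K (fun i j => c i j != 0) /\
    forall i : 'I_K, z i = \sum_(j < m) c i j *: u j.
Proof.
move=> [p [b [p_incr [z_def _]]]].
have p_mono : {in [pred i | (i <= K)%N] &, {homo p : i1 i2 / (i1 <= i2)%N}}.
  apply: homo_leq_in => [//|i1 i2 i3|i1 i3 _|i _].
  - exact: leq_trans.
  - by rewrite inE => i3K i2 /andP[_ i23]; rewrite inE ltnW // (leq_trans i23).
  - by rewrite inE => iK; apply/ltnW/p_incr.
pose c i j := if (p i <= j < p i.+1)%N then b j else 0.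
exists (p K), c; split.
  move=> i1 i2 i12 i2K j1 j2; rewrite /c.
  case: ifP => [/andP[_ j1_lt] _|_]; last by rewrite eqxx.
  case: ifP => [/andP[j2_ge _] _|_]; last by rewrite eqxx.
  apply: leq_trans j1_lt (leq_trans _ j2_ge).
  by apply: p_mono; rewrite ?inE ?(ltnW i2K) ?(ltn_trans i12 i2K).
move=> i; rewrite z_def big_geq_mkord.
rewrite (big_ord_widen_cond (p K) (fun j => true && (p i <= j)%N) (fun j => b j *: u j));
  last first.
  by apply: p_mono; rewrite ?inE ?ltn_ord.
rewrite big_mkcond /=; apply: eq_bigr => j _; rewrite /c.
by case: ifP => // _; rewrite scale0r.
Qed.

Lemma sumr_delta_scale (R : pzRingType) (V : lmodType R) m (z : 'I_m -> V) i :
  \sum_(j < m) (j == i)%:R *: z j = z i.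
Proof.
rewrite (bigD1 i) //= eqxx scale1r big1 ?addr0 // => j /negbTE ->.
by rewrite scale0r.
Qed.

Section spreading_model_lower_estimate.
Variables (R : realType) (n : nat -> nat) (x : nat -> nat -> R).
Variables (V : normedModType R) (u : nat -> V).
Hypotheses (adm : admissible R n) (x_block : normalized_block_basis n x).
Hypothesis x_spread : spreading_model n x u.

Lemma spreading_lower_approx k m (c : nat -> nat -> R) eps : 0 < eps ->
  successive_sets (n k) (fun i j => c i j != 0) ->
  (\sum_(i < n k) `|\sum_(j < m) c i j *: u j|) / flog R (n k)
    <= `|\sum_(i < n k) \sum_(j < m) c i j *: u j| + ((n k)%:R + 1) * eps.
Proof.
move=> eps_gt0 c_succ; have [x_c00 [_ [x_succ _]]] := x_block.
pose A (j : 'I_m) := \sum_(i < n k) c i j.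
have [l0 approx_sum] := x_spread A eps_gt0.
have [l approx_row] :=
  fin_all_exists (fun i : 'I_(n k) => x_spread (fun j : 'I_m => c i j) eps_gt0).
(* A single spread-out index sequence s serves all the approximations at once. *)
pose L := (l0 + \max_(i < n k) l i)%N.
pose s (j : 'I_m) := (L + j).+1.
have s_gt l' : (l' <= L)%N -> forall j, (l' < s j)%N.
  by move=> l'L j; rewrite ltnS (leq_trans l'L) // leq_addr.
have s_incr (j1 j2 : 'I_m) : (j1 < j2)%N -> (s j1 < s j2)%N.
  by move=> j12; rewrite ltnS ltn_add2l.
pose Y i t := \sum_(j < m) c i j * x (s j) t.
have row_close (i : 'I_(n k)) : `|\sum_(j < m) c i j *: u j| < Xnorm n (Y i) + eps.
  have L_ge : (l i <= L)%N := leq_trans (leq_bigmax i) (leq_addl _ _).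
  by case/ltr_normlP: (approx_row i s (s_gt _ L_ge) s_incr) => ? ?; lra.
have sum_close : Xnorm n (fun t => \sum_(i < n k) Y i t)
    < `|\sum_(i < n k) \sum_(j < m) c i j *: u j| + eps.
  have -> : (fun t => \sum_(i < n k) Y i t) = (fun t => \sum_(j < m) A j * x (s j) t).
    apply: funext => t; rewrite /Y exchange_big /=.
    by apply: eq_bigr => j _; rewrite mulr_suml.
  have -> : \sum_(i < n k) \sum_(j < m) c i j *: u j = \sum_(j < m) A j *: u j.
    by rewrite exchange_big /=; apply: eq_bigr => j _; rewrite scaler_suml.
  by case/ltr_normlP: (approx_sum s (s_gt _ (leq_addr _ _)) s_incr) => ? ?; lra.
have Y_c00 i : c00 (Y i).
  apply: c00_sum => j; have [N x_van] := x_c00 (s j).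
  by exists N => t tN; rewrite x_van ?mulr0.
have lower := sum_Xnorm_successive_le adm Y_c00
  (successive_combinations c_succ s_incr x_succ).
have rows_le : \sum_(i < n k) `|\sum_(j < m) c i j *: u j|
    <= \sum_(i < n k) Xnorm n (Y i) + (n k)%:R * eps.
  have -> : (n k)%:R * eps = \sum_(i < n k) eps by rewrite sumr_const card_ord mulr_natl.
  by rewrite -big_split /=; apply: ler_sum => i _; apply: ltW.
have F_ge1 := flog_ge1 R (admissible_gt0 adm k).
have F_gt0 := flog_gt0 R (admissible_gt0 adm k).
apply: le_trans (_ : (\sum_(i < n k) Xnorm n (Y i) + (n k)%:R * eps) / flog R (n k) <= _).
  by rewrite ler_pM2r ?invr_gt0.
have : (n k)%:R * eps / flog R (n k) <= (n k)%:R * eps.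
  by rewrite ler_pdivrMr // ler_peMr // mulr_ge0 // ltW.
rewrite mulrDl; move: lower sum_close; lra.
Qed.

Lemma block_lower k (z : 'I_(n k) -> V) : block_of u z ->
  (\sum_(i < n k) `|z i|) / flog R (n k) <= `|\sum_(i < n k) z i|.
Proof.
case/block_of_coef => m [c [c_succ z_def]].
have -> : \sum_(i < n k) `|z i| = \sum_(i < n k) `|\sum_(j < m) c i j *: u j|.
  by apply: eq_bigr => i _; rewrite z_def.
have -> : \sum_(i < n k) z i = \sum_(i < n k) \sum_(j < m) c i j *: u j.
  by apply: eq_bigr => i _; rewrite z_def.
apply/ler_addgt0Pr => e e_gt0.
have K_gt0 : 0 < (n k)%:R + 1 :> R by rewrite ltr_wpDl.
have := @spreading_lower_approx k m c _ (divr_gt0 e_gt0 K_gt0) c_succ.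
by rewrite mulrCA divff ?gt_eqF ?mulr1.
Qed.

Lemma not_block_fin_rep_sublinear (W : forall m, ('I_m -> R) -> R) (r : R) :
  0 < r < 1 ->
  (forall m (i : 'I_m), 1 <= W m (fun j => (j == i)%:R)) ->
  (forall m, (0 < m)%N -> W m (fun=> 1) <= m%:R `^ r) ->
  ~ block_fin_rep W u.
Proof.
move=> r01 W_unit W_ones W_rep.
have four_gt0 : 0 < 4 :> R by [].
have [M0 sublinear] := flog_powR_sublinear four_gt0 r01.
set M := n M0; have M_gt0 : (0 < M)%N := admissible_gt0 adm M0.
have [z [z_block z_equiv]] := W_rep 1 ltr01 M.
(* lra cannot invert the non-numeral [1 + 1]. *)
rewrite -[1 + 1 : R]/2 in z_equiv.
have z_ge i : 2^-1 <= `|z i|.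
  have [W_le _] := z_equiv (fun j => (j == i)%:R).
  rewrite sumr_delta_scale in W_le; have := W_unit _ i.
  by move: W_le; lra.
have sum_le : `|\sum_(i < M) z i| <= 2 * M%:R `^ r.
  have [_ le_W] := z_equiv (fun=> 1).
  have -> : \sum_(i < M) z i = \sum_(i < M) (1 : R) *: z i.
    by apply: eq_bigr => i _; rewrite scale1r.
  by have := W_ones _ M_gt0; move: le_W; lra.
have sum_ge : M%:R * 2^-1 <= \sum_(i < M) `|z i|.
  have <- : \sum_(i < M) (2^-1 : R) = M%:R * 2^-1.
    by rewrite sumr_const card_ord mulr_natl.
  by apply: ler_sum => i _.
have F_gt0 := flog_gt0 R M_gt0.
have lower := block_lower z_block; rewrite -/M ler_pdivrMr // in lower.
have := sublinear M (admissible_ge adm M0); have := ler_wpM2r (ltW F_gt0) sum_le.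
lra.
Qed.

End spreading_model_lower_estimate.

Lemma powR_ge1 (R : realType) (a r : R) : 1 <= a -> 0 <= r -> 1 <= a `^ r.
Proof.
move=> a_ge1 r_ge0; have := ge0_ler_powR r_ge0 _ _ a_ge1; rewrite powR1; apply.
  by rewrite nnegrE.
by rewrite nnegrE (le_trans ler01).
Qed.

Lemma lp_norm_delta (R : realType) (p : R) m (i : 'I_m) : 0 < p ->
  lp_norm p (fun j => (j == i)%:R) = 1.
Proof.
move=> p_gt0; rewrite /lp_norm (bigD1 i) //= eqxx normr1 powR1 big1 ?addr0 /=.
  by rewrite powR1.
by move=> j /negbTE ->; rewrite normr0 powR0 // gt_eqF.
Qed.

Lemma lp_norm_ones (R : realType) (p : R) m :
  lp_norm p (fun _ : 'I_m => 1) = m%:R `^ p^-1.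
Proof. by rewrite /lp_norm normr1 powR1 sumr_const card_ord. Qed.

Lemma c0_norm_delta (R : realType) m (i : 'I_m) :
  c0_norm (fun j => (j == i)%:R : R) = 1.
Proof.
apply/le_anti/andP; split.
  by apply: bigmax_le => // j _; case: (j == i); rewrite ?normr1 ?normr0.
by rewrite /c0_norm (bigD1 i) //= eqxx normr1 le_max lexx.
Qed.

Lemma c0_norm_ones (R : realType) m : (0 < m)%N ->
  c0_norm (fun _ : 'I_m => 1 : R) = 1.
Proof.
case: m => // m _; apply/le_anti/andP; split.
  by apply: bigmax_le => // j _; rewrite normr1.
by rewrite /c0_norm (bigD1 ord0) //= normr1 le_max lexx.
Qed.

Theorem proposition1p2 (R : realType) (n : nat -> nat) (x : nat -> nat -> R)
  (V : normedModType R) (u : nat -> V) :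
  admissible R n ->
  normalized_block_basis n x ->
  spreading_model n x u ->
  (forall p : R, 1 < p -> ~ block_fin_rep (lp_norm p) u) /\
  ~ block_fin_rep (@c0_norm R) u.
Proof.
move=> adm x_block x_spread; split=> [p p_gt1|].
  have p_gt0 : 0 < p by apply: lt_trans p_gt1.
  apply: (not_block_fin_rep_sublinear adm x_block x_spread (r := p^-1)).
  - by rewrite invr_gt0 p_gt0 invf_lt1.
  - by move=> m i; rewrite lp_norm_delta.
  - by move=> m _; rewrite lp_norm_ones.
apply: (not_block_fin_rep_sublinear adm x_block x_spread (r := 2^-1)).
- by rewrite invr_gt0 invf_lt1 ?ltr0n ?ltr1n.
- by move=> m i; rewrite c0_norm_delta.
- by move=> m m_gt0; rewrite c0_norm_ones // powR_ge1 ?ler1n ?invr_ge0.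
Qed.
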